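(* The following non-implications hold; each item asserts the existence of a probability space $(\Omega,\mathcal{F},P)$ and real random variables $X, X_1, X_2, \dots$ on it with the stated properties. (i) There exist such $X,X_n$ with $X_n\xrightarrow{S_1\text{-}d}X$ but not $X_n\xrightarrow{S_2\text{-}d}X$; and there exist such $X,X_n$ with $X_n\xrightarrow{S_2\text{-}d}X$ but not $X_n\xrightarrow{S_1\text{-}d}X$. (ii) There exist such $X,X_n$ with $X_n\xrightarrow{S\text{-}L^\infty}X$ but not $X_n\xrightarrow{S_2\text{-}d}X$. (iii) There exist such $X,X_n$ with $X_n\xrightarrow{S\text{-}L^1}X$ but not $X_n\xrightarrow{S_2\text{-}d}X$. (iv) For every $\alpha>0$ there exist such $X,X_n$ with $X_n\xrightarrow{S_\alpha\text{-}a.s.}X$ but not $X_n\xrightarrow{S_1\text{-}d}X$. (v) For each $i\in\{1,2\}$ there exist such $X,X_n$ with $X_n$ converging completely to $X$ but not $X_n\xrightarrow{S_i\text{-}d}X$.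
   Context: Let $X,X_1,X_2,\dots$ be real random variables on a probability space $(\Omega,\mathcal{F},P)$, and let $F_n(x)=P(X_n\le x)$ and $F(x)=P(X\le x)$ be their distribution functions. - Complete convergence: for every $\varepsilon>0$, $\sum_{n=1}^\infty P(|X_n-X|\ge\varepsilon)<\infty$. - $X_n\xrightarrow{S\text{-}L^p}X$ ($p>0$): $\sum_{n=1}^\infty E[|X_n-X|^p]<\infty$. - $X_n\xrightarrow{S\text{-}L^\infty}X$: $\sum_{n=1}^\infty \|X_n-X\|_\infty<\infty$, where $\|\cdot\|_\infty$ is the essential supremum norm. - $X_n\xrightarrow{S_\alpha\text{-}a.s.}X$ ($\alpha>0$): $\sum_{n=1}^\infty |X_n-X|^\alpha<\infty$ almost surely. - $X_n\xrightarrow{S_1\text{-}d}X$: for every bounded Lipschitz continuous $f:\mathbb{R}\to\mathbb{R}$, $\sum_{n=1}^\infty |E[f(X_n)-f(X)]|<\infty$. - $X_n\xrightarrow{S_2\text{-}d}X$: for every continuity point $x$ of $F$, $\sum_{n=1}^\infty |F_n(x)-F(x)|<\infty$. *)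

From HB Require Import structures.
From mathcomp Require Import all_boot all_order all_algebra.
From mathcomp Require Import all_classical all_reals all_analysis.
From mathcomp Require Import ess_sup_inf.
Set Implicit Arguments. Unset Strict Implicit. Unset Printing Implicit Defensive.
Import Order.TTheory GRing.Theory Num.Theory.
Import numFieldNormedType.Exports.
Local Open Scope classical_set_scope.
Local Open Scope ring_scope.

Section modes.
Variable R : realType.
Variables (d : measure_display) (T : measurableType d) (P : probability T R).
Variables (Xs : nat -> {RV P >-> R}) (X : {RV P >-> R}).

Definition conv_complete : Prop :=
  forall eps : R, 0 < eps ->
    (\sum_(0 <= n <oo) P [set w | (eps <= `|Xs n w - X w|)%R] < +oo)%E.

Definition conv_SLp (p : R) : Prop :=
  (\sum_(0 <= n <oo) 'E_P[(fun w => `|Xs n w - X w| `^ p)%R] < +oo)%E.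

Definition conv_SLinf : Prop :=
  (\sum_(0 <= n <oo) ess_sup P (fun w => (`|Xs n w - X w|%R)%:E) < +oo)%E.

Definition conv_Salpha_as (alpha : R) : Prop :=
  {ae P, forall w, (\sum_(0 <= n <oo) ((`|Xs n w - X w| `^ alpha)%R)%:E < +oo)%E}.

Definition bounded_lipschitz (f : R -> R) : Prop :=
  (exists M : R, forall x, `|f x| <= M) /\
  (exists L : R, forall x y, `|f x - f y| <= L * `|x - y|).

Definition conv_S1d : Prop :=
  forall f : R -> R, bounded_lipschitz f ->
    (\sum_(0 <= n <oo) `| 'E_P[f \o Xs n] - 'E_P[f \o X] | < +oo)%E.

Definition conv_S2d : Prop :=
  forall x : R, {for x, continuous (fun r => fine (cdf X r))} ->
    (\sum_(0 <= n <oo) `| cdf (Xs n) x - cdf X x | < +oo)%E.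

End modes.

Definition separating_example (R : realType)
  (Good Bad : forall (d : measure_display) (T : measurableType d)
      (P : probability T R), (nat -> {RV P >-> R}) -> {RV P >-> R} -> Prop) : Prop :=
  exists (d : measure_display) (T : measurableType d) (P : probability T R)
         (Xs : nat -> {RV P >-> R}) (X : {RV P >-> R}),
    Good d T P Xs X /\ ~ Bad d T P Xs X.

From HB Require Import structures.
From mathcomp Require Import all_boot all_order all_algebra.
From mathcomp Require Import all_classical all_reals all_analysis.
From mathcomp Require Import ess_sup_inf measurable_realfun.
From mathcomp Require Import ring lra.
Set Implicit Arguments.
Unset Strict Implicit.
Unset Printing Implicit Defensive.

Import Order.TTheory GRing.Theory Num.Theory.
Import numFieldNormedType.Exports.
Local Open Scope classical_set_scope.
Local Open Scope ring_scope.

(* All examples live on the uniform probability space on [0, 1]; write U for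
   the identity and h_n = 1/(n+1), so that sum h_n^2 < oo but sum h_n = oo.
   - X_n = U^2 - h_n^2, X = U^2: |X_n - X| = h_n^2 uniformly, which forces
     S_1-d (through the Lipschitz constant of the test function), S-L^oo,
     S-L^1 and complete convergence. Yet 0 is a continuity point of the cdf
     F(r) = sqrt r of X and F_n(0) - F(0) = P(U <= h_n) = h_n, so S_2-d fails.
   - X_n = -h_n, X = 0 (constants): for each x, F_n(x) = F(x) eventually,
     giving S_2-d, and |X_n - X| -> 0 uniformly gives complete convergence;
     but E[min(|X_n|, 1)] = h_n, so S_1-d fails.
   - X_n = 1{U <= h_n}, X = 0: X_n(w) = 0 eventually for every w > 0, giving
     S_alpha-a.s. for every alpha; again E[min(|X_n|, 1)] = h_n. *)

Section nonnegative_series.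
Variable R : realType.
Local Open Scope ereal_scope.

Lemma harmonic_le1 n : (harmonic n <= 1 :> R)%R.
Proof. by rewrite /= invf_le1 ?ler1n. Qed.

Lemma nneseries_lty_cvgn (u : R ^nat) : (forall n, 0 <= u n)%R ->
  \sum_(0 <= k <oo) (u k)%:E < +oo -> cvgn (series u).
Proof.
move=> u0 ulty; apply: nondecreasing_is_cvgn.
  by apply/nondecreasing_seqP => n; rewrite seriesSr lerDl.
have sum_ge0 : 0 <= \sum_(0 <= k <oo) (u k)%:E.
  by apply: nneseries_ge0 => n _ _; rewrite lee_fin.
exists (fine (\sum_(0 <= k <oo) (u k)%:E)) => _ [n _ <-].
rewrite -lee_fin fineK ?ge0_fin_numE// (le_trans _ (nneseries_lim_ge n _))//.
  by rewrite /series/= sumEFin.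
by move=> k _ _; rewrite lee_fin.
Qed.

Lemma nneseries_harmonic : \sum_(0 <= k <oo) (harmonic k)%:E = +oo :> \bar R.
Proof.
apply/eqP; rewrite eq_le leey/= leNgt; apply/negP => /nneseries_lty_cvgn.
by move=> /(_ (@harmonic_ge0 R)); exact: dvg_harmonic.
Qed.

Lemma nneseries_ge_harmonic (u : (\bar R)^nat) :
  (forall n, (harmonic n)%:E <= u n) -> \sum_(0 <= k <oo) u k = +oo.
Proof.
move=> hu; apply/eqP; rewrite eq_le leey/= -nneseries_harmonic.
by apply: lee_nneseries => // n _ _; rewrite lee_fin harmonic_ge0.
Qed.

Lemma nneseries_bounded_lty (u : (\bar R)^nat) (M : R) : (forall n, 0 <= u n) ->
  (forall N, \sum_(0 <= k < N) u k <= M%:E) -> \sum_(0 <= k <oo) u k < +oo.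
Proof.
move=> u0 uM; apply: (le_lt_trans _ (ltry M)).
by apply: lime_le; [exact: is_cvg_ereal_nneg_natsum | exact: nearW].
Qed.

Lemma nneseries_eventually0_lty (u : (\bar R)^nat) N : (forall n, 0 <= u n) ->
  (forall n, u n < +oo) -> (forall n, (N <= n)%N -> u n = 0) ->
  \sum_(0 <= k <oo) u k < +oo.
Proof.
move=> u0 ulty uN; rewrite (nneseries_split 0 N)// add0n eseries0 ?adde0//.
  exact: lte_sum_pinfty.
by move=> n /uN.
Qed.

Lemma sqr_harmonic_le_telescope k :
  (harmonic k ^+ 2 <= 2 * (harmonic k - harmonic k.+1) :> R)%R.
Proof.
rewrite /= -[k.+2%:R]natr1; set x := k.+1%:R.
have x1 : (1 <= x)%R by rewrite ler1n.
clearbody x; have x0 : (0 < x)%R by rewrite (lt_le_trans ltr01).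
have -> : (x^-1 - (x + 1)^-1 = (x * (x + 1))^-1)%R.
  by field; rewrite !gt_eqF// ltr_wpDr.
rewrite exprVn -[2%R]invrK -invfM lef_pV2 ?posrE ?mulr_gt0 ?exprn_gt0 ?invr_gt0
  ?ltr_wpDl//; last exact: ltW.
by rewrite mulrC -ler_pdivlMr ?invr_gt0// invrK; nra.
Qed.

Lemma nneseries_sqr_harmonic_lty :
  \sum_(0 <= k <oo) ((harmonic k ^+ 2)%R)%:E < +oo :> \bar R.
Proof.
apply: (@nneseries_bounded_lty _ 2) => [n|N]; first by rewrite lee_fin sqr_ge0.
rewrite sumEFin lee_fin.
apply: (le_trans (ler_sum _ (fun k _ => sqr_harmonic_le_telescope k))).
rewrite -mulr_sumr (@telescope_sumr_eq _ _ _ (fun k => - harmonic k)%R)//; last first.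
  by move=> k _; rewrite opprK addrC.
by rewrite /= invr1 opprK addrC ler_piMr// lerBlDr lerDl invr_ge0.
Qed.

End nonnegative_series.

Section bounded_lipschitz.
Variable R : realType.

Lemma bounded_lipschitz_continuous (f : R -> R) :
  bounded_lipschitz f -> continuous f.
Proof.
move=> [_ [L fL]] x; apply/cvgrPdist_lt => e e0.
have L1 : 0 < `|L| + 1 by rewrite ltr_wpDl.
apply/nbhs_ballP; exists (e / (`|L| + 1)) => /=; first by rewrite divr_gt0.
move=> y; rewrite /ball/= => xy; apply: (le_lt_trans (fL x y)).
apply: (@le_lt_trans _ _ ((`|L| + 1) * `|x - y|)); last by rewrite mulrC -ltr_pdivlMr.
by rewrite ler_wpM2r// (le_trans (ler_norm L))// lerDl.
Qed.

Lemma bounded_lipschitz_measurable (f : R -> R) :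
  bounded_lipschitz f -> measurable_fun setT f.
Proof. by move/bounded_lipschitz_continuous; exact: continuous_measurable_fun. Qed.

Definition trunc_norm (x : R) : R := Num.min `|x| 1.

Lemma trunc_norm_id x : 0 <= x <= 1 -> trunc_norm x = x.
Proof. by move=> /andP[x0 x1]; rewrite /trunc_norm ger0_norm// min_l. Qed.

Lemma trunc_normN x : trunc_norm (- x) = trunc_norm x.
Proof. by rewrite /trunc_norm normrN. Qed.

Lemma bounded_lipschitz_trunc_norm : bounded_lipschitz trunc_norm.
Proof.
split; first by exists 1 => x; rewrite ger0_norm ?ge_min ?lexx ?orbT// le_min ler01 andbT.
exists 1 => x y; rewrite mul1r /trunc_norm.
have := ler_dist_dist x y; rewrite ler_norml => /andP[xy yx].
have := normr_ge0 x; have := normr_ge0 y.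
move: xy yx; set a := `|x|; set b := `|y|; set e := `|x - y| => xy yx a0 b0.
by rewrite /Num.min; case: ifP => xa; case: ifP => yb;
  rewrite ler_norml; apply/andP; split; lra.
Qed.

End bounded_lipschitz.
Arguments trunc_norm {R}.

Section uniformly_close.
Variables (R : realType) (d : measure_display) (T : measurableType d).
Variable (P : probability T R).
Local Open Scope ereal_scope.

Lemma bounded_integrable (g : T -> R) (M : R) : measurable_fun setT g ->
  (forall x, `|g x| <= M)%R -> P.-integrable setT (EFin \o g).
Proof.
move=> mg gM; apply: (@le_integrable _ _ _ P _ measurableT _ (EFin \o cst M)) => //.
- exact/measurable_EFinP.
- by move=> x _ /=; rewrite lee_fin (le_trans (gM x)) ?ler_norm.
- exact: finite_measure_integrable_cst.
Qed.

Lemma abse_expectationB_le (g h : T -> R) (M K : R) :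
  measurable_fun setT g -> measurable_fun setT h ->
  (forall x, `|g x| <= M)%R -> (forall x, `|h x| <= M)%R ->
  (forall x, `|g x - h x| <= K)%R -> `|'E_P[g] - 'E_P[h]| <= K%:E.
Proof.
move=> mg mh gM hM ghK; rewrite expectation.unlock.
rewrite -integralB_EFin//; [|exact: bounded_integrable gM|exact: bounded_integrable hM].
have mgh : measurable_fun setT (g \- h)%R by exact: measurable_funB.
apply: (le_trans (le_abse_integral _ _ _)) => //; first exact/measurable_EFinP.
rewrite -[leRHS](expectation_cst P K) expectation.unlock.
apply: ge0_le_integral => //=.
- by apply/measurable_EFinP; exact: measurableT_comp.
- by move=> x _; rewrite lee_fin ghK.
Qed.

Variables (Xs : nat -> {RV P >-> R}) (X : {RV P >-> R}) (a : R ^nat).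
Hypothesis Xs_close : forall n w, (`|Xs n w - X w| <= a n)%R.

Let a_ge0 n : (0 <= a n)%R.
Proof. by apply: le_trans (Xs_close n point); exact: normr_ge0. Qed.

Lemma conv_S1d_uniformly_close : \sum_(0 <= n <oo) (a n)%:E < +oo -> conv_S1d Xs X.
Proof.
move=> a_lty f bl_f; have [[M fM] [L fL]] := bl_f.
have L0 : (0 <= L)%R by have := fL 1%R 0%R; rewrite subr0 normr1 mulr1; exact: le_trans.
have mf := bounded_lipschitz_measurable bl_f.
apply: (@le_lt_trans _ _ (\sum_(0 <= n <oo) (L%:E * (a n)%:E))).
  apply: lee_nneseries => [n _ _|n _]; first exact: abse_ge0.
  rewrite -EFinM; apply: (abse_expectationB_le (M := M)) => [||x|x|x] //=.
  - exact: measurableT_comp mf _.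
  - exact: measurableT_comp mf _.
  - by rewrite (le_trans (fL _ _))// ler_wpM2l.
by rewrite nneseriesZl ?lte_mul_pinfty// => n _; rewrite lee_fin.
Qed.

Let P_setT_gt0 : 0 < P setT.
Proof. by rewrite probability_setT lte01. Qed.

Lemma conv_SLinf_uniformly_close : \sum_(0 <= n <oo) (a n)%:E < +oo -> conv_SLinf Xs X.
Proof.
move=> a_lty; apply: le_lt_trans a_lty; apply: lee_nneseries => [n _ _|n _].
  by apply: ess_sup_ger => [|w]; [exact: P_setT_gt0 | rewrite lee_fin].
by apply/ess_supP; apply: nearW => w; rewrite lee_fin.
Qed.

Lemma conv_SLp_uniformly_close (p : R) : (0 <= p)%R ->
  \sum_(0 <= n <oo) (a n `^ p)%:E < +oo -> conv_SLp Xs X p.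
Proof.
move=> p0 a_lty; apply: le_lt_trans a_lty; apply: lee_nneseries => [n _ _|n _].
  by apply: expectation_ge0 => w; exact: powR_ge0.
rewrite -(expectation_cst P); apply: expectation_le.
- apply: (measurableT_comp (measurable_powR p)).
  exact/measurableT_comp/measurable_funB.
- exact: measurable_cst.
- by move=> w; exact: powR_ge0.
- by move=> w; exact: powR_ge0.
- by apply: aeW => w; rewrite ge0_ler_powR ?nnegrE.
Qed.

Lemma conv_complete_uniformly_close : a @ \oo --> 0%R -> conv_complete Xs X.
Proof.
move=> a0 eps eps0; have /cvgr0Pnorm_lt/(_ _ eps0)[N _ aN] := a0.
apply: (@nneseries_eventually0_lty _ _ N) => [n|n|n Nn].
- exact: measure_ge0.
- apply: (le_lt_trans (probability_le1 _ _)); last exact: ltry.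
  rewrite -[X in measurable X]setTI.
  apply: (measurable_fun_ler (f := cst eps)) => //.
  exact/measurableT_comp/measurable_funB.
- rewrite -(measure0 P); congr (P _); apply/seteqP; split => w //=.
  move=> eps_le; suff : (eps < eps)%R by rewrite ltxx.
  rewrite (le_lt_trans eps_le)// (le_lt_trans (Xs_close n w))//.
  by rewrite (le_lt_trans (ler_norm _) (aN n Nn)).
Qed.

End uniformly_close.

Section witnesses_of_divergence.
Variables (R : realType) (d : measure_display) (T : measurableType d).
Variables (P : probability T R) (Xs : nat -> {RV P >-> R}) (X : {RV P >-> R}).
Local Open Scope ereal_scope.

Lemma not_conv_S1d_trunc_norm : 'E_P[trunc_norm \o X] = 0 ->
  (forall n, 'E_P[trunc_norm \o Xs n] = (harmonic n)%:E) -> ~ conv_S1d Xs X.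
Proof.
move=> EX EXs /(_ _ (@bounded_lipschitz_trunc_norm R)).
rewrite nneseries_ge_harmonic ?ltxx// => n.
by rewrite EX EXs sube0 gee0_abs// lee_fin harmonic_ge0.
Qed.

Lemma not_conv_S2d_at x : {for x, continuous (fun r => fine (cdf X r))} ->
  cdf X x = 0 -> (forall n, cdf (Xs n) x = (harmonic n)%:E) -> ~ conv_S2d Xs X.
Proof.
move=> Xx FX FXs /(_ x Xx); rewrite nneseries_ge_harmonic ?ltxx// => n.
by rewrite FX FXs sube0 gee0_abs// lee_fin harmonic_ge0.
Qed.

End witnesses_of_divergence.

Section constant_random_variables.
Variables (R : realType) (d : measure_display) (T : measurableType d).
Variable (P : probability T R).
Local Open Scope ereal_scope.

Lemma cdf_cst (v x : R) : cdf (cst v : {RV P >-> R}) x = ((v <= x)%R%:R)%:E.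
Proof.
rewrite /cdf /distribution /pushforward preimage_cst.
have [vx|xv] := leP v x.
  by rewrite mem_set ?probability_setT//= in_itv/= vx.
by rewrite memNset ?measure0//= in_itv/= leNgt xv.
Qed.

Lemma expectation_comp_cst (f : R -> R) (v : R) :
  'E_P[f \o (cst v : {RV P >-> R})] = (f v)%:E.
Proof. exact: (expectation_cst P (f v)). Qed.

Lemma conv_S2d_cst (v : R ^nat) (v0 : R) : (forall n, v n <= v0)%R ->
  v @ \oo --> v0 -> conv_S2d (fun n => cst (v n) : {RV P >-> R}) (cst v0).
Proof.
move=> v_le v_cvg x _.
have [N vN] : exists N, forall n, (N <= n)%N -> (v n <= x)%R = (v0 <= x)%R.
  have [v0x|xv0] := leP v0 x.
    by exists 0%N => n _; rewrite (le_trans (v_le n) v0x).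
  have /cvgrPdist_lt/(_ (v0 - x)%R) := v_cvg; rewrite subr_gt0 => /(_ xv0)[N _ vN].
  exists N => n /vN/= v_close; apply/negbTE; rewrite -ltNge.
  by have := le_lt_trans (ler_norm _) v_close; rewrite ltrD2l ltrN2.
apply: (@nneseries_eventually0_lty _ _ N) => [n|n|n Nn].
- exact: abse_ge0.
- by rewrite !cdf_cst -EFinB/= ltry.
- by rewrite !cdf_cst vN// -EFinB subrr abse0.
Qed.

Lemma conv_S2d_cst_harmonic :
  conv_S2d (fun n => cst (- harmonic n)%R : {RV P >-> R}) (cst 0%R).
Proof.
apply: conv_S2d_cst => [n|]; first by rewrite oppr_le0 harmonic_ge0.
by rewrite -oppr0; apply: cvgN; exact: cvg_harmonic.
Qed.

Lemma conv_complete_cst_harmonic :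
  conv_complete (fun n => cst (- harmonic n)%R : {RV P >-> R}) (cst 0%R).
Proof.
apply: (@conv_complete_uniformly_close _ _ _ _ _ _ harmonic) => [n w|].
  by rewrite /= subr0 normrN ger0_norm ?harmonic_ge0.
exact: cvg_harmonic.
Qed.

Lemma not_conv_S1d_cst_harmonic :
  ~ conv_S1d (fun n => cst (- harmonic n)%R : {RV P >-> R}) (cst 0%R).
Proof.
apply: not_conv_S1d_trunc_norm => [|n]; rewrite expectation_comp_cst ?trunc_normN.
  by rewrite trunc_norm_id ?lexx ?ler01.
by rewrite trunc_norm_id ?harmonic_ge0 ?harmonic_le1.
Qed.

End constant_random_variables.

Section unit_interval.
Variable R : realType.
Local Open Scope ereal_scope.

Definition uniform01 : probability (measurableTypeR R) R := uniform_prob (@ltr01 R).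

Lemma uniform01E (A : set (measurableTypeR R)) : measurable A ->
  uniform01 A = lebesgue_measure (A `&` `[0%R, 1%R]).
Proof.
move=> mA; rewrite /uniform01/= /uniform_prob integral_uniform_pdf.
rewrite (eq_integral (cst 1)); last first.
  move=> x; rewrite inE => -[_]; rewrite /= in_itv/= /uniform_pdf => ->.
  by rewrite subr0 invr1.
by rewrite integral_cst ?mul1e//; exact: measurableI.
Qed.

Lemma uniform01_itv (c : R) : (0 <= c <= 1)%R -> uniform01 `]-oo, c]%classic = c%:E.
Proof.
move=> /andP[c0 c1]; rewrite uniform01E//.
have -> : (`]-oo, c] `&` `[0%R, 1%R] = `[0%R, c] :> set R)%classic.
  apply/seteqP; split => w /=; rewrite !in_itv/=.
    by move=> [wc /andP[w0 _]]; rewrite w0.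
  by move=> /andP[w0 wc]; rewrite w0 wc (le_trans wc c1).
rewrite lebesgue_measure_itv/= lte_fin; case: ltP => [_|c_le0].
  by rewrite oppr0 adde0.
by rewrite (@le_anti _ _ c 0%R)// c0 c_le0.
Qed.

Lemma uniform01_on_unit (A B : set (measurableTypeR R)) :
  measurable A -> measurable B -> A `&` `[0%R, 1%R] = B `&` `[0%R, 1%R] ->
  uniform01 A = uniform01 B.
Proof. by move=> mA mB AB; rewrite !uniform01E// AB. Qed.

End unit_interval.

Section shifted_square.
Variable R : realType.
Local Open Scope ereal_scope.

Definition sqr_sub (a : R) (w : measurableTypeR R) : R := w ^+ 2 - a.

Lemma measurable_sqr_sub a : measurable_fun setT (sqr_sub a).
Proof. by apply: measurable_funB => //; exact: measurable_funX. Qed.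

HB.instance Definition _ a :=
  isMeasurableFun.Build _ _ _ _ (sqr_sub a) (measurable_sqr_sub a).

Definition rv_sqr_sub a : {RV uniform01 R >-> R} := sqr_sub a.

Let Xs n := rv_sqr_sub (harmonic n ^+ 2)%R.

Lemma cdf_sqr_sub (a r c : R) : (0 <= c <= 1)%R -> (c ^+ 2 = r + a)%R ->
  cdf (rv_sqr_sub a) r = c%:E.
Proof.
move=> c01 ra; have /andP[c0 c1] := c01; rewrite -(uniform01_itv c01).
apply: uniform01_on_unit => //; first exact: measurable_funPTI.
apply/seteqP; split => w /=; rewrite !in_itv/= /sqr_sub => -[w_le /andP[w0 w1]];
  split; rewrite ?w0//.
- by rewrite -(@ler_sqr _ w c) ?nnegrE//; lra.
- have : (w ^+ 2 <= c ^+ 2)%R by rewrite ler_sqr ?nnegrE.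
  lra.
Qed.

Lemma continuous_cdf_sqr_sub0 :
  {for 0%R, continuous (fun r => fine (cdf (rv_sqr_sub 0) r))}.
Proof.
have cdf0 : cdf (rv_sqr_sub 0) 0 = 0.
  by rewrite (@cdf_sqr_sub 0 0 0) ?lexx ?ler01// expr0n addr0.
apply/cvgrPdist_lt => e e0; set c := Num.min (e / 2)%R 1%R.
have c0 : (0 < c)%R by rewrite lt_min ltr01 andbT divr_gt0.
have c01 : (0 <= c <= 1)%R by rewrite (ltW c0) ge_min lexx orbT.
have ce : (c < e)%R by rewrite gt_min ltr_pdivrMr//; lra.
apply/nbhs_ballP; exists (c ^+ 2)%R; first by rewrite /= exprn_gt0.
(* for |r| < c^2, 0 <= F(r) <= F(c^2) = c < e *)
move=> r r_small; rewrite /ball/= sub0r normrN in r_small.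
change (`|fine (cdf (rv_sqr_sub 0) 0) - fine (cdf (rv_sqr_sub 0) r)| < e)%R.
have cdf_le : cdf (rv_sqr_sub 0) r <= c%:E.
  rewrite -(@cdf_sqr_sub 0 (c ^+ 2) c)// ?addr0//; apply: cdf_nondecreasing.
  exact: le_trans (ler_norm r) (ltW r_small).
have cdf_fin : cdf (rv_sqr_sub 0) r \is a fin_num.
  by rewrite ge0_fin_numE ?cdf_ge0// (le_lt_trans cdf_le (ltry _)).
rewrite cdf0/= sub0r normrN ger0_norm; last by rewrite -lee_fin fineK ?cdf_ge0.
by rewrite (le_lt_trans _ ce)// -lee_fin fineK.
Qed.

Lemma not_conv_S2d_sqr_sub : ~ conv_S2d Xs (rv_sqr_sub 0).
Proof.
apply: (not_conv_S2d_at continuous_cdf_sqr_sub0) => [|n].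
  by rewrite (@cdf_sqr_sub 0 0 0) ?lexx ?ler01 ?expr0n ?addr0.
by rewrite (@cdf_sqr_sub _ 0 (harmonic n)) ?add0r ?harmonic_ge0 ?harmonic_le1.
Qed.

Lemma sqr_sub_close n w : (`|Xs n w - rv_sqr_sub 0 w| <= harmonic n ^+ 2)%R.
Proof. by rewrite /= /sqr_sub subr0 addrAC subrr add0r normrN ger0_norm ?sqr_ge0. Qed.

Lemma conv_S1d_sqr_sub : conv_S1d Xs (rv_sqr_sub 0).
Proof.
exact: conv_S1d_uniformly_close sqr_sub_close (nneseries_sqr_harmonic_lty R).
Qed.

Lemma conv_SLinf_sqr_sub : conv_SLinf Xs (rv_sqr_sub 0).
Proof.
exact: conv_SLinf_uniformly_close sqr_sub_close (nneseries_sqr_harmonic_lty R).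
Qed.

Lemma conv_SL1_sqr_sub : conv_SLp Xs (rv_sqr_sub 0) 1.
Proof.
apply: (conv_SLp_uniformly_close sqr_sub_close ler01).
rewrite (eq_eseriesr (g := fun n => (harmonic n ^+ 2)%:E)) => [|n _].
  exact: nneseries_sqr_harmonic_lty.
by rewrite powRr1// sqr_ge0.
Qed.

Lemma conv_complete_sqr_sub : conv_complete Xs (rv_sqr_sub 0).
Proof.
apply: (conv_complete_uniformly_close sqr_sub_close).
by rewrite -(mulr0 (0 : R)%R); exact: (cvgM cvg_harmonic cvg_harmonic).
Qed.

End shifted_square.

Section indicator_of_shrinking_interval.
Variable R : realType.
Local Open Scope ereal_scope.

Definition rv_indic_le (c : R) : {RV uniform01 R >-> R} :=
  @indic_mfun _ (measurableTypeR R) R `]-oo, c] (measurable_itv _).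

Lemma expectation_trunc_norm_indic_le c : (0 <= c <= 1)%R ->
  'E_(uniform01 R)[trunc_norm \o rv_indic_le c] = c%:E.
Proof.
move=> c01; rewrite -(uniform01_itv c01) -expectation_indic//.
congr expectation; apply/funext => w /=.
by rewrite /mindic indicE; case: (_ \in _); rewrite trunc_norm_id ?lexx ?ler01.
Qed.

Lemma not_conv_S1d_indic_le :
  ~ conv_S1d (fun n => rv_indic_le (harmonic n)) (cst 0%R).
Proof.
apply: not_conv_S1d_trunc_norm => [|n].
  by rewrite expectation_comp_cst trunc_norm_id ?lexx ?ler01.
by rewrite expectation_trunc_norm_indic_le ?harmonic_ge0 ?harmonic_le1.
Qed.

Lemma conv_Salpha_as_indic_le (alpha : R) : (0 < alpha)%R ->
  conv_Salpha_as (fun n => rv_indic_le (harmonic n)) (cst 0%R) alpha.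
Proof.
move=> alpha0; exists `]-oo, 0%R]%classic; split => //.
  by rewrite uniform01_itv ?lexx ?ler01.
move=> w /= w_bad; rewrite in_itv/= leNgt; apply/negP => w0; apply: w_bad.
have /cvgr0Pnorm_lt/(_ _ w0)[N _ hN] := @cvg_harmonic R.
apply: (@nneseries_eventually0_lty _ _ N) => [n|n|n Nn].
- by rewrite lee_fin powR_ge0.
- exact: ltry.
- rewrite /= /mindic indicE memNset ?subr0 ?normr0 ?powR0 ?gt_eqF//=.
  by apply/negP; rewrite in_itv/= -ltNge (le_lt_trans (ler_norm _) (hN n Nn)).
Qed.

End indicator_of_shrinking_interval.

Theorem proposition2p1 (R : realType) :
  (* (i) *)
  (separating_example (@conv_S1d R) (@conv_S2d R) /\
   separating_example (@conv_S2d R) (@conv_S1d R)) /\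
  (* (ii) *)
  separating_example (@conv_SLinf R) (@conv_S2d R) /\
  (* (iii) *)
  separating_example (fun d T P Xs X => @conv_SLp R d T P Xs X 1) (@conv_S2d R) /\
  (* (iv) *)
  (forall alpha : R, 0 < alpha ->
     separating_example (fun d T P Xs X => @conv_Salpha_as R d T P Xs X alpha)
                        (@conv_S1d R)) /\
  (* (v) *)
  (separating_example (@conv_complete R) (@conv_S1d R) /\
   separating_example (@conv_complete R) (@conv_S2d R)).
Proof.
split; [split|split; [|split; [|split; [|split]]]]; try move=> alpha alpha0;
  do 5 eexists; split.
- exact: conv_S1d_sqr_sub.
- exact: not_conv_S2d_sqr_sub.
(* {RV P >-> R} does not depend on P, so the space of the constant example
   has to be named. *)
- exact: (conv_S2d_cst_harmonic (P := uniform01 R)).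
- exact: not_conv_S1d_cst_harmonic.
- exact: conv_SLinf_sqr_sub.
- exact: not_conv_S2d_sqr_sub.
- exact: conv_SL1_sqr_sub.
- exact: not_conv_S2d_sqr_sub.
- exact: conv_Salpha_as_indic_le.
- exact: not_conv_S1d_indic_le.
- exact: (conv_complete_cst_harmonic (uniform01 R)).
- exact: not_conv_S1d_cst_harmonic.
- exact: conv_complete_sqr_sub.
- exact: not_conv_S2d_sqr_sub.
Qed.
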